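(* Let $p$ be the POP of length 5 defined by the relations $1>2$, $1>3$, $4>2$ and $4>3$ (label $5$ isolated), and let $a(n)=|S_n(p)|$. Then $$\sum_{n\geq 0}a(n)x^n=\frac{1-7x+14x^2-6x^3+4x^4}{(1-4x+2x^2)^2}.$$
   Context: An $n$-permutation is a word $\pi=\pi_1\cdots\pi_n$ containing each of $1,\ldots,n$ exactly once; $S_n$ is the set of $n$-permutations ($S_0$ consists of the empty permutation). A partially ordered pattern (POP) $p$ of length $k$ is a partial order on the label set $\{1,\ldots,k\}$; it is described by a set of generating relations, where a relation $x>y$ means that in an occurrence the entry in the $x$-th chosen position must be larger than the entry in the $y$-th chosen position, and labels not involved in any relation are unconstrained. An $n$-permutation $\pi$ contains $p$ if there are indices $1\leq i_1<\cdots<i_k\leq n$ such that $\pi_{i_x}>\pi_{i_y}$ whenever $x>y$ in the partial order; otherwise $\pi$ avoids $p$. $S_n(p)$ denotes the set of $n$-permutations avoiding $p$. *)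

From HB Require Import structures.
From mathcomp Require Import all_boot all_order all_algebra all_fingroup.
Set Implicit Arguments. Unset Strict Implicit. Unset Printing Implicit Defensive.
Import GRing.Theory.

(* A POP of length k: a list of generating relations (x, y) on labels 'I_k
   (label 1 of the paper is ordinal 0, etc.), each meaning "x > y". *)
Definition pop (k : nat) := seq ('I_k * 'I_k).

Definition contains_pop (k n : nat) (p : pop k) (s : 'S_n) : bool :=
  [exists f : {ffun 'I_k -> 'I_n},
     [forall i : 'I_k, forall j : 'I_k, (i < j)%N ==> (f i < f j)%N]
     && all (fun r => (s (f r.2) < s (f r.1))%N) p].

Definition avoids_pop (k n : nat) (p : pop k) (s : 'S_n) : bool :=
  ~~ contains_pop p s.

Definition num_avoiders (k : nat) (p : pop k) (n : nat) : nat :=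
  #|[set s : 'S_n | avoids_pop p s]|.

Definition p45 : pop 5 :=
  [:: (inord 0, inord 1); (inord 0, inord 2); (inord 3, inord 1); (inord 3, inord 2)].

Definition gf_trunc (a : nat -> nat) (n : nat) : {poly int} :=
  \sum_(k < n.+1) ((a k)%:Z)%:P * 'X^k.

Definition numer45 : {poly int} := Poly [:: 1; -7; 14; -6; 4]%R.
Definition denom45 : {poly int} := ((Poly [:: 1; -4; 2]) ^+ 2)%R.

From HB Require Import structures.
From mathcomp Require Import all_boot all_order all_algebra all_fingroup.
From mathcomp Require Import ring zify.
Set Implicit Arguments. Unset Strict Implicit. Unset Printing Implicit Defensive.

(* Let q4 be the POP of length 4 with 1>2, 1>3, 4>2, 4>3; then p45 is q4 with an
   extra isolated label appended, and we write b(n) = |S_n(q4)|, a(n) = |S_n(p45)|.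

   Inserting an entry into a permutation ('lift_perm')
      preserves occurrences, and an occurrence that avoids the inserted position
      comes from the smaller permutation.  Consequently an isolated last label
      only asks for one more position at the end, so a(n+1) = (n+1) b(n): the last
      value is arbitrary and the remaining entries must avoid q4.
   2. The recurrence b(n+2) + 2 b(n) = 4 b(n+1).  Classify q4-avoiders by their last
      value j.  Labels 1 and 4 of q4 sit above two other entries, so an entry of
      value 0 or 1 at either end of the permutation is never used by an
      occurrence: the classes j = 0, 1 have b(n) elements each.  For j >= 2 the
      first value is 0 or 1 (otherwise first entry, the entries 0 and 1, and the
      last entry form an occurrence), and deleting that first entry shows that
      the class has twice the size of the class of j-1 one size down.
   3. Hence a satisfies the linear recurrence whose characteristic polynomial is
      the reciprocal of (1-4x+2x^2)^2, and with a(0..4) = 1, 1, 2, 6, 24 this is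
      exactly the coefficientwise power series identity of the theorem. *)

Lemma card_fixed_value n (P : pred 'S_n.+1) (i0 j0 : 'I_n.+1) :
  #|[set s | P s & s i0 == j0]| = #|[set t : 'S_n | P (lift_perm i0 j0 t)]|.
Proof.
rewrite -!sum1_card (reindex (lift_perm i0 j0)); last first.
  pose delete i (s : 'S_n.+1) k := odflt k (unlift (s i) (s (lift i k))).
  have deleteK i (s : 'S_n.+1) k : lift (s i) (delete i s k) = s (lift i k).
    rewrite /delete; have := neq_lift i k.
    by rewrite -(can_eq (permK s)) => /unlift_some[] ? ? ->.
  have delete_inj s : injective (delete i0 s).
    apply: can_inj (delete (s i0) s^-1%g) _ => k.
    by rewrite {1}/delete deleteK !permK liftK.
  exists (fun s => perm (delete_inj s)) => [t _ | s].
    by apply/permP=> k; rewrite permE /delete lift_perm_lift lift_perm_id liftK.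
  rewrite inE => /andP[_] /eqP si0; apply/permP=> k.
  case: (unliftP i0 k) => [k'|] ->; rewrite ?lift_perm_id //.
  by rewrite lift_perm_lift -si0 permE deleteK.
by apply: eq_bigl => t; rewrite !inE lift_perm_id eqxx andbT.
Qed.

Definition is_occurrence k n (p : pop k) (s : 'S_n) (f : {ffun 'I_k -> 'I_n}) : bool :=
  [forall i : 'I_k, forall j : 'I_k, (i < j)%N ==> (f i < f j)%N]
  && all (fun r => (s (f r.2) < s (f r.1))%N) p.

Lemma lift_ltn n (h : 'I_n.+1) (a b : 'I_n) : (lift h a < lift h b)%N = (a < b)%N.
Proof. by rewrite /= !ltnNge leq_bump2. Qed.

Lemma occurrence_liftE k n (p : pop k) (t : 'S_n) (i0 j : 'I_n.+1)
    (g : {ffun 'I_k -> 'I_n}) :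
  is_occurrence p (lift_perm i0 j t) [ffun x => lift i0 (g x)] = is_occurrence p t g.
Proof.
congr andb.
  by apply: eq_forallb => x; apply: eq_forallb => y; rewrite !ffunE lift_ltn.
by apply: eq_all => r; rewrite !ffunE !lift_perm_lift lift_ltn.
Qed.

Lemma contains_pop_lift k n (p : pop k) (t : 'S_n) (i0 j : 'I_n.+1) :
  contains_pop p t -> contains_pop p (lift_perm i0 j t).
Proof.
case/existsP=> g occ; apply/existsP; exists [ffun x => lift i0 (g x)].
exact: etrans (occurrence_liftE p t i0 j g) occ.
Qed.

Lemma contains_pop_unlift k n (p : pop k) (t : 'S_n) (i0 j : 'I_n.+1)
    (f : {ffun 'I_k -> 'I_n.+1}) :
  (forall x, i0 != f x) -> is_occurrence p (lift_perm i0 j t) f -> contains_pop p t.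
Proof.
move=> avoid occ.
pose g : {ffun 'I_k -> 'I_n} := [ffun x => sval (unlift_some (avoid x))].
suff fE : f = [ffun x => lift i0 (g x)].
  by move: occ; rewrite fE occurrence_liftE => occ; apply/existsP; exists g.
by apply/ffunP=> x; rewrite !ffunE; case: unlift_some.
Qed.

Definition extend_pop k (p : pop k) : pop k.+1 :=
  [seq (widen_ord (leqnSn k) r.1, widen_ord (leqnSn k) r.2) | r <- p].

Lemma widen_lift_max k (x : 'I_k) : widen_ord (leqnSn k) x = lift ord_max x.
Proof. by apply: val_inj; rewrite [RHS]lift_max. Qed.

(* The isolated last label of extend_pop p can always be placed at the last
   position, so whatever the last entry, containment reduces to the prefix. *)
Lemma contains_extend_pop k n (p : pop k) (u : 'S_n) (j : 'I_n.+1) :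
  contains_pop (extend_pop p) (lift_perm ord_max j u) = contains_pop p u.
Proof.
apply/idP/idP => /existsP[f /andP[/forallP inc /allP rel]].
  pose g : {ffun 'I_k -> 'I_n.+1} := [ffun x => f (lift ord_max x)].
  have below_last x : (g x < f ord_max)%N.
    by rewrite ffunE; apply: (implyP (forallP (inc _) _)); rewrite lift_max ltn_ord.
  apply: (@contains_pop_unlift _ _ _ _ ord_max j g) => [x|].
    by rewrite neq_ltn (leq_trans (below_last x)) ?orbT // -ltnS.
  apply/andP; split.
    apply/forallP=> x; apply/forallP=> y; rewrite !ffunE -(lift_ltn ord_max).
    exact: (forallP (inc _) _).
  apply/allP=> r pr; rewrite !ffunE -!widen_lift_max; exact: rel (map_f _ pr).
pose g : {ffun 'I_k.+1 -> 'I_n.+1} :=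
  [ffun x => if unlift ord_max x is Some y then lift ord_max (f y) else ord_max].
have gE x : g (lift ord_max x) = lift ord_max (f x) by rewrite ffunE liftK.
apply/existsP; exists g; apply/andP; split.
  apply/forallP=> x; apply/forallP=> y; apply/implyP.
  case: (unliftP ord_max x) => [x' ->|->]; last by rewrite ltnNge -ltnS ltn_ord.
  case: (unliftP ord_max y) => [y' ->|->].
    by rewrite !gE !lift_ltn; apply: (implyP (forallP (inc _) _)).
  by rewrite gE ffunE unlift_none => _; rewrite lift_max ltn_ord.
apply/allP=> _ /mapP[r pr ->] /=; rewrite !widen_lift_max !gE !lift_perm_lift lift_ltn.
exact: rel.
Qed.

Definition q4 : pop 4 :=
  [:: (inord 0, inord 1); (inord 0, inord 2); (inord 3, inord 1); (inord 3, inord 2)].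

Definition q4_at n (s : 'S_n) (i1 i2 i3 i4 : 'I_n) : bool :=
  [&& (i1 < i2)%N, (i2 < i3)%N, (i3 < i4)%N, (s i2 < s i1)%N, (s i3 < s i1)%N,
      (s i2 < s i4)%N & (s i3 < s i4)%N].

Lemma p45E : p45 = extend_pop q4.
Proof.
by rewrite /p45 /extend_pop /=; congr [:: (_, _); (_, _); (_, _); (_, _)];
  apply: val_inj; rewrite /= !inordK.
Qed.

Lemma occurrence_q4 n (s : 'S_n) (f : {ffun 'I_4 -> 'I_n}) :
  is_occurrence q4 s f =
  q4_at s (f (inord 0)) (f (inord 1)) (f (inord 2)) (f (inord 3)).
Proof.
rewrite /is_occurrence /q4_at /= !andbT.
apply/andP/idP => [[/forallP inc ->] | /and4P[h12 h23 h34 ->]]; last first.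
  have fE (z : 'I_4) : f z = f (inord z) by rewrite inord_val.
  split=> //; apply/forallP=> x; apply/forallP=> y; rewrite (fE x) (fE y).
  by case: x y => [[|[|[|[|?]]]] ?] [[|[|[|[|?]]]] ?] //=; lia.
have step (a b : nat) : (a < b < 4)%N -> (f (inord a) < f (inord b))%N.
  case/andP=> ab b4; apply: (implyP (forallP (inc _) _)).
  by rewrite !inordK // (ltn_trans ab).
by rewrite !step.
Qed.

Lemma containsE k n (p : pop k) (s : 'S_n) :
  contains_pop p s = [exists f, is_occurrence p s f].
Proof. by []. Qed.

Lemma contains_q4P n (s : 'S_n) :
  reflect (exists i1 i2 i3 i4, q4_at s i1 i2 i3 i4) (contains_pop q4 s).
Proof.
rewrite containsE; apply: (iffP existsP) => [[f] | [i1 [i2 [i3 [i4 occ]]]]].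
  rewrite occurrence_q4 => occ.
  by exists (f (inord 0)), (f (inord 1)), (f (inord 2)), (f (inord 3)).
exists [ffun x : 'I_4 => nth i1 [:: i1; i2; i3; i4] x].
by rewrite occurrence_q4 !ffunE !inordK.
Qed.

Lemma two_smaller_values n (s : 'S_n) (a b c : 'I_n) :
  (a < b)%N -> (s a < s c)%N -> (s b < s c)%N -> (2 <= s c)%N.
Proof.
move=> ab ac bc; rewrite leqNgt; apply/negP => c1.
have /perm_inj sab : s a = s b by apply: ord_inj => /=; lia.
by move: ab; rewrite sab ltnn.
Qed.

Lemma q4_occurrence_ends n (s : 'S_n) (f : {ffun 'I_4 -> 'I_n}) :
  is_occurrence q4 s f ->
  [/\ forall x, (f (inord 0) <= f x <= f (inord 3))%N,
      (2 <= s (f (inord 0)))%N & (2 <= s (f (inord 3)))%N].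
Proof.
move=> occ; have := occ; rewrite occurrence_q4.
move=> /and4P[h12 h23 h34 /and4P[r21 r31 r24 r34]].
split; [|exact: two_smaller_values h23 r21 r31|exact: two_smaller_values h23 r24 r34].
have fE (z : 'I_4) : f z = f (inord z) by rewrite inord_val.
by move=> x; rewrite (fE x); case: x => [[|[|[|[|?]]]] ?] //=; lia.
Qed.

Lemma contains_q4_insert_small n (i0 j : 'I_n.+1) (t : 'S_n) :
  (i0 == ord0) || (i0 == ord_max) -> (j <= 1)%N ->
  contains_pop q4 (lift_perm i0 j t) = contains_pop q4 t.
Proof.
move=> i0_end j1; apply/idP/idP; last exact: contains_pop_lift.
rewrite containsE => /existsP[f occ]; apply: (contains_pop_unlift _ occ) => x.
have [bounds v0 v3] := q4_occurrence_ends occ.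
apply/eqP => fx.
have : (f (inord 0) == i0) || (f (inord 3) == i0).
  have := ltn_ord (f (inord 3)); move: (bounds x); rewrite -fx.
  by case/orP: i0_end => /eqP->; rewrite -!val_eqE /=; lia.
by case/orP=> /eqP fi; [move: v0 | move: v3]; rewrite fi lift_perm_id; lia.
Qed.

(* In a q4-avoider whose last value is at least 2 the first value is 0 or 1:
   otherwise the first entry, the entries 0 and 1 and the last entry would form
   an occurrence. *)
Lemma avoider_first_small n (s : 'S_n.+1) :
  ~~ contains_pop q4 s -> (2 <= s ord_max)%N -> (s ord0 <= 1)%N.
Proof.
move=> avoid last2; rewrite leqNgt; apply/negP => first2.
have n2 : (2 < n.+1)%N := leq_ltn_trans last2 (ltn_ord _).
pose pos (v : nat) := (s^-1)%g (inord v).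
have posE v : (v <= 1)%N -> s (pos v) = v :> nat.
  by move=> v1; rewrite permKV inordK //; lia.
have inner v : (v <= 1)%N -> (0 < pos v < n)%N.
  move=> v1; have sv := posE v v1.
  apply/andP; split; rewrite ltnNge; apply/negP=> h.
    have e : pos v = ord0 by apply: ord_inj => /=; lia.
    by move: first2; rewrite -e; lia.
  have e : pos v = ord_max by apply: ord_inj => /=; have := ltn_ord (pos v); lia.
  by move: last2; rewrite -e; lia.
have [s0 s1] := (posE 0 isT, posE 1 isT).
have [in0 in1] := (inner 0 isT, inner 1 isT).
move/contains_q4P: avoid; apply.
case: (ltngtP (pos 0) (pos 1)) => [lt01|lt10|eq01].
- by exists ord0, (pos 0), (pos 1), ord_max; rewrite /q4_at /= s0 s1; lia.
- by exists ord0, (pos 1), (pos 0), ord_max; rewrite /q4_at /= s0 s1; lia.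
- by move: s1; rewrite -(ord_inj eq01) s0.
Qed.

Lemma card_by_value n (P : pred 'S_n.+1) (i0 : 'I_n.+1) :
  #|[set s | P s]| = \sum_(j < n.+1) #|[set s | P s & s i0 == j]|.
Proof.
rewrite -sum1_card (partition_big (fun s : 'S_n.+1 => s i0) xpredT) //=.
by apply: eq_bigr => j _; rewrite -sum1_card; apply: eq_bigl => s; rewrite !inE.
Qed.

(* E(n, j): the q4-avoiders of size n+1 with last value j. *)
Definition ends_at n (j : nat) : nat :=
  #|[set t : 'S_n.+1 | avoids_pop q4 t & t ord_max == j :> nat]|.

Lemma avoiders_by_last n : num_avoiders q4 n.+1 = \sum_(j < n.+1) ends_at n j.
Proof.
rewrite /num_avoiders (card_by_value _ ord_max).
by apply: eq_bigr => j _; apply: eq_card => t; rewrite !inE.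
Qed.

Lemma ends_at_small n (j : 'I_n.+1) : (j <= 1)%N -> ends_at n j = num_avoiders q4 n.
Proof.
move=> j1; rewrite /ends_at (eq_card (B := [set s | avoids_pop q4 s & s ord_max == j])).
  rewrite card_fixed_value; apply: eq_card => t.
  by rewrite !inE /avoids_pop contains_q4_insert_small ?eqxx ?orbT.
by move=> t; rewrite !inE val_eqE.
Qed.

Lemma ends_at_first_value n j (x : 'I_n.+2) : (x <= 1)%N -> (2 <= j)%N ->
  #|[set s : 'S_n.+2 | (avoids_pop q4 s && (s ord_max == j :> nat)) & s ord0 == x]|
  = ends_at n j.-1.
Proof.
move=> x1 j2; rewrite card_fixed_value; apply: eq_card => t.
have -> : (ord_max : 'I_n.+2) = lift ord0 ord_max by apply: val_inj.
rewrite !inE /avoids_pop contains_q4_insert_small ?eqxx // lift_perm_lift /=.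
by congr andb; rewrite /bump; case: leqP => /=; lia.
Qed.

(* E(n+1, j) = 2 E(n, j-1) for j >= 2, since the first value must be 0 or 1. *)
Lemma ends_at_large n j : (2 <= j)%N -> ends_at n.+1 j = 2 * ends_at n j.-1.
Proof.
move=> j2; rewrite /ends_at (card_by_value _ ord0) !big_ord_recl big1 ?addn0.
  by rewrite !ends_at_first_value // addnn mul2n.
move=> x _; apply/eqP; rewrite cards_eq0; apply/eqP/setP => s; rewrite !inE.
apply/negP => /andP[/andP[avoid /eqP last_j] /eqP first_x].
have := avoider_first_small avoid; rewrite last_j first_x => /(_ j2).
by rewrite /= /bump /=; lia.
Qed.

Lemma num_avoiders_q4_rec n :
  num_avoiders q4 n.+2 + 2 * num_avoiders q4 n = 4 * num_avoiders q4 n.+1.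
Proof.
have shift m : num_avoiders q4 m.+1 = num_avoiders q4 m + \sum_(j < m) ends_at m j.+1.
  by rewrite avoiders_by_last big_ord_recl (@ends_at_small m ord0).
rewrite avoiders_by_last !big_ord_recl /=.
rewrite (eq_bigr (fun j : 'I_n => 2 * ends_at n j.+1)); last first.
  by move=> j _; rewrite ends_at_large.
rewrite -big_distrr (@ends_at_small n.+1 ord0) //.
rewrite (@ends_at_small n.+1 (lift ord0 ord0)) //.
rewrite !shift /=; set S := \sum_(j < n) _; lia.
Qed.

Lemma num_avoiders_empty k (p : pop k.+1) : num_avoiders p 0 = 1.
Proof.
rewrite /num_avoiders (eq_card (B := [set: 'S_0])) ?cardsT ?card_Sn //.
by move=> t; rewrite !inE; apply/negP => /existsP[f _]; case: (f ord0).
Qed.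

Lemma num_avoiders_p45 n : num_avoiders p45 n.+1 = n.+1 * num_avoiders q4 n.
Proof.
rewrite /num_avoiders (card_by_value _ ord_max).
rewrite (eq_bigr (fun _ => #|[set t : 'S_n | avoids_pop q4 t]|)); last first.
  move=> j _; rewrite (eq_card (B := [set s | avoids_pop p45 s & s ord_max == j])).
    rewrite card_fixed_value; apply: eq_card => t.
    by rewrite !inE /avoids_pop p45E contains_extend_pop.
  by move=> s; rewrite !inE.
by rewrite sum_nat_const card_ord.
Qed.

(* The recurrence of a, read off the denominator (1-4x+2x^2)^2. *)
Lemma num_avoiders_p45_rec m :
  num_avoiders p45 m.+4.+1 + 20 * num_avoiders p45 m.+3 + 4 * num_avoiders p45 m.+1
  = 8 * num_avoiders p45 m.+4 + 16 * num_avoiders p45 m.+2.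
Proof.
rewrite !num_avoiders_p45.
have := num_avoiders_q4_rec m; have := num_avoiders_q4_rec m.+1.
have := num_avoiders_q4_rec m.+2; nia.
Qed.

Lemma num_avoiders_p45_initial :
  [/\ num_avoiders p45 0 = 1, num_avoiders p45 1 = 1, num_avoiders p45 2 = 2,
      num_avoiders p45 3 = 6 & num_avoiders p45 4 = 24].
Proof.
have b0 : num_avoiders q4 0 = 1 by exact: num_avoiders_empty.
have b1 : num_avoiders q4 1 = 1.
  by rewrite avoiders_by_last big_ord1 (@ends_at_small 0 ord0).
have b2 := num_avoiders_q4_rec 0; have b3 := num_avoiders_q4_rec 1.
rewrite !num_avoiders_p45 num_avoiders_empty; split; lia.
Qed.

Import GRing.Theory.
Local Open Scope ring_scope.

Lemma coef_gf_trunc (a : nat -> nat) n j : (j <= n)%N -> (gf_trunc a n)`_j = (a j)%:Z.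
Proof.
move=> le_jn; rewrite /gf_trunc coef_sum (bigD1 (Ordinal (le_jn : (j < n.+1)%N))) //=.
rewrite coefCM coefXn eqxx mulr1 big1 ?addr0 // => k ne_kj.
rewrite coefCM coefXn; case: eqP => [jk|]; last by rewrite mulr0.
by case/eqP: ne_kj; apply: val_inj.
Qed.

Lemma coef_gf_trunc_mul (a : nat -> nat) (d : {poly int}) n i : (i <= n)%N ->
  (gf_trunc a n * d)`_i = \sum_(j < i.+1) (a (i - j)%N)%:Z * d`_j.
Proof.
move=> le_in; rewrite coefMr; apply: eq_bigr => j _.
by rewrite coef_gf_trunc //; apply: leq_trans (leq_subr _ _) le_in.
Qed.

Lemma denom45E : denom45 = Poly [:: 1; -8; 20; -16; 4].
Proof. by rewrite /denom45 /= !cons_poly_def; ring. Qed.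

(* Theorem 4.5: coefficients 0..4 come from the initial values, the higher
   ones vanish by the recurrence. *)
Theorem theorem4p5 :
  forall n i : nat, (i <= n)%N ->
    ((gf_trunc (num_avoiders p45) n * denom45)`_i = numer45`_i)%R.
Proof.
move=> n i le_in; rewrite coef_gf_trunc_mul // denom45E /numer45 coef_Poly.
under eq_bigr do rewrite coef_Poly.
have [a0 a1 a2 a3 a4] := num_avoiders_p45_initial.
case: i {le_in} => [|[|[|[|[|m]]]]]; rewrite !big_ord_recl ?big_ord0 /bump /=.
1-5: by rewrite ?a0 ?a1 ?a2 ?a3 ?a4.
rewrite big1 => [|j _]; last exact: mulr0.
rewrite nth_nil !subSS !subn0.
have := num_avoiders_p45_rec m; lia.
Qed.
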